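(* Let $A$ be a partially symmetric 0-dialgebra. Then for all $x,y\in A$, $\mathrm{sym}(x\dashv y^\ast)=\mathrm{sym}(x^\ast\dashv y)$ and $\mathrm{sym}(x\dashv y)=\mathrm{sym}(x^\ast\dashv y^\ast)$.
   Context: A 0-dialgebra with involution is a vector space with bilinear operations $\dashv,\vdash$ satisfying $a\dashv(b\dashv c)=a\dashv(b\vdash c)$ and $(a\dashv b)\vdash c=(a\vdash b)\vdash c$, together with a linear map $\ast$ with $(a^\ast)^\ast=a$, $(a\dashv b)^\ast=b^\ast\vdash a^\ast$, $(a\vdash b)^\ast=b^\ast\dashv a^\ast$. Write $\mathrm{sym}(x)=x+x^\ast$ and $\{x,y\}=x\dashv y-y\vdash x$. Such a structure is partially symmetric if $\{\mathrm{sym}(x),y\}=0$ and $\{x,\mathrm{sym}(y)\}=0$ for all $x,y$. *)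

From HB Require Import structures.
From mathcomp Require Import all_boot all_algebra.
Set Implicit Arguments. Unset Strict Implicit. Unset Printing Implicit Defensive.
Import GRing.Theory.
Local Open Scope ring_scope.

(* A 0-dialgebra with involution over a field F, on a vector space V:
   lt = "⊣", rt = "⊢", star = involution. *)
Definition bilinear_op (F : fieldType) (V : lmodType F) (op : V -> V -> V) :=
  (forall a x y z, op (a *: x + y) z = a *: op x z + op y z) /\
  (forall a x y z, op x (a *: y + z) = a *: op x y + op x z).

Definition is_0_dialgebra_inv (F : fieldType) (V : lmodType F)
    (lt rt : V -> V -> V) (star : V -> V) :=
  [/\ bilinear_op lt, bilinear_op rt,
      (forall a x y, star (a *: x + y) = a *: star x + star y),
      (forall a b c, lt a (lt b c) = lt a (rt b c)) &
      (forall a b c, rt (lt a b) c = rt (rt a b) c)] /\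
  [/\ (forall a, star (star a) = a),
      (forall a b, star (lt a b) = rt (star b) (star a)) &
      (forall a b, star (rt a b) = lt (star b) (star a))].

Definition sym (F : fieldType) (V : lmodType F) (star : V -> V) (x : V) : V :=
  x + star x.

Definition dibracket (F : fieldType) (V : lmodType F) (lt rt : V -> V -> V)
  (x y : V) : V := lt x y - rt y x.

Definition partially_symmetric (F : fieldType) (V : lmodType F)
    (lt rt : V -> V -> V) (star : V -> V) :=
  (forall x y : V, dibracket lt rt (sym star x) y = 0) /\
  (forall x y : V, dibracket lt rt x (sym star y) = 0).

From mathcomp Require Import all_boot all_algebra.
Import GRing.Theory.
Local Open Scope ring_scope.
Set Implicit Arguments. Unset Strict Implicit. Unset Printing Implicit Defensive.

(* Write {x, y} for the dibracket and x' for star x. Partial symmetry gives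
   {x', y} = -{x, y} = {x, y'}, hence {x', y'} = {x, y}; and expanding sym with
   (x ⊣ y)' = y' ⊢ x' shows sym (x ⊣ y) - sym (x' ⊣ y') = {x, y} - {x', y'}.
   The second identity is this difference vanishing; the first is the case y := y'. *)

Section Bilinear.

Variables (F : fieldType) (V : lmodType F) (op : V -> V -> V).
Hypothesis op_bilin : bilinear_op op.

Lemma bilinear_opDl (x y z : V) : op (x + y) z = op x z + op y z.
Proof. by have := op_bilin.1 1 x y z; rewrite !scale1r. Qed.

Lemma bilinear_opDr (x y z : V) : op x (y + z) = op x y + op x z.
Proof. by have := op_bilin.2 1 x y z; rewrite !scale1r. Qed.

End Bilinear.

Section Dibracket.

Variables (F : fieldType) (V : lmodType F).
Variables (lt rt : V -> V -> V) (star : V -> V).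
Hypotheses (lt_bilin : bilinear_op lt) (rt_bilin : bilinear_op rt).

Lemma dibracketDl (x y z : V) :
  dibracket lt rt (x + y) z = dibracket lt rt x z + dibracket lt rt y z.
Proof.
by rewrite /dibracket (bilinear_opDl lt_bilin) (bilinear_opDr rt_bilin) opprD addrACA.
Qed.

Lemma dibracketDr (x y z : V) :
  dibracket lt rt x (y + z) = dibracket lt rt x y + dibracket lt rt x z.
Proof.
by rewrite /dibracket (bilinear_opDr lt_bilin) (bilinear_opDl rt_bilin) opprD addrACA.
Qed.

Hypothesis psym : partially_symmetric lt rt star.

Lemma dibracket_starl (x y : V) :
  dibracket lt rt (star x) y = - dibracket lt rt x y.
Proof. by apply/eqP; rewrite -addr_eq0 addrC -dibracketDl; apply/eqP/psym.1. Qed.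

Lemma dibracket_starr (x y : V) :
  dibracket lt rt x (star y) = - dibracket lt rt x y.
Proof. by apply/eqP; rewrite -addr_eq0 addrC -dibracketDr; apply/eqP/psym.2. Qed.

Lemma dibracket_star2 (x y : V) :
  dibracket lt rt (star x) (star y) = dibracket lt rt x y.
Proof. by rewrite dibracket_starl dibracket_starr opprK. Qed.

End Dibracket.

Section SymProduct.

Variables (F : fieldType) (V : lmodType F).
Variables (lt rt : V -> V -> V) (star : V -> V).
Hypotheses (starK : involutive star)
  (star_lt : forall a b, star (lt a b) = rt (star b) (star a)).

Lemma sym_lt_subr_star2 (x y : V) :
  sym star (lt x y) - sym star (lt (star x) (star y))
  = dibracket lt rt x y - dibracket lt rt (star x) (star y).
Proof.
rewrite /sym /dibracket !star_lt !starK !opprD !opprK.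
by rewrite [LHS]addrACA [RHS]addrACA [- rt y x + _]addrC.
Qed.

Lemma sym_lt_star2 (x y : V) :
  dibracket lt rt (star x) (star y) = dibracket lt rt x y ->
  sym star (lt x y) = sym star (lt (star x) (star y)).
Proof. by move=> eq_br; apply/eqP; rewrite -subr_eq0 sym_lt_subr_star2 eq_br subrr. Qed.

End SymProduct.

Theorem lemma5p2 (F : fieldType) (V : lmodType F)
    (lt rt : V -> V -> V) (star : V -> V) :
  is_0_dialgebra_inv lt rt star ->
  partially_symmetric lt rt star ->
  forall x y : V,
    sym star (lt x (star y)) = sym star (lt (star x) y) /\
    sym star (lt x y) = sym star (lt (star x) (star y)).
Proof.
move=> [[lt_bilin rt_bilin _ _ _] [starK star_lt _]] psym x y.
have br_star2 := dibracket_star2 lt_bilin rt_bilin psym.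
split; last exact: sym_lt_star2.
by rewrite -{2}[y]starK; apply: sym_lt_star2.
Qed.
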